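(* Assume complete resource pooling and let $B^s=B\prod_{j=1}^J\beta_{s_j}$. For every permutation $(S_1,\ldots,S_J)$ of $\mathcal{S}$, binary words $w_1,\ldots,w_{J-1}$ and nonnegative integers $n_\ell,m_\ell,r_\ell$, with $\alpha_{(\ell)}=\alpha_{\mathcal{U}(\{S_1,\ldots,S_\ell\})}$ and the convention $0^0=1$, the processes $W,U,X,Y,V,R$ defined below have stationary distributions $$\pi_W(S_1,w_1,\ldots,w_{J-1},S_J)=B^s\prod_{\ell=1}^{J-1}\alpha_{(\ell)}^{\#0(w_\ell)}\beta_{\{S_{\ell+1},\ldots,S_J\}}^{\#1(w_\ell)},$$ $$\pi_U(S_1,n_1,m_1,\ldots,n_{J-1},m_{J-1},S_J)=B^s\prod_{\ell=1}^{J-1}\binom{n_\ell+m_\ell}{n_\ell}\alpha_{(\ell)}^{n_\ell}\beta_{\{S_{\ell+1},\ldots,S_J\}}^{m_\ell},$$ $$\pi_X(S_1,n_1,\ldots,n_{J-1},S_J)=B^s\prod_{\ell=1}^{J-1}\frac{\alpha_{(\ell)}^{n_\ell}}{\beta_{\{S_1,\ldots,S_\ell\}}^{n_\ell+1}},\qquad \pi_Y(S_1,m_1,\ldots,m_{J-1},S_J)=B^s\prod_{\ell=1}^{J-1}\frac{\beta_{\{S_{\ell+1},\ldots,S_J\}}^{m_\ell}}{\alpha_{\mathcal{C}(\{S_{\ell+1},\ldots,S_J\})}^{m_\ell+1}},$$ $$\pi_V(S_1,r_1,\ldots,r_{J-1},S_J)=B^s\prod_{\ell=1}^{J-1}\big(\alpha_{(\ell)}+\beta_{\{S_{\ell+1},\ldots,S_J\}}\big)^{r_\ell},\qquad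 \pi_R(S_1,\ldots,S_J)=B^s\prod_{\ell=1}^{J-1}\big(\beta_{\{S_1,\ldots,S_\ell\}}-\alpha_{(\ell)}\big)^{-1}.$$
   Context: Setting: finite type sets $\mathcal{C}=\{c_1,\ldots,c_I\}$, $\mathcal{S}=\{s_1,\ldots,s_J\}$, connected bipartite compatibility graph $G=(\mathcal{C},\mathcal{S},\mathcal{E})$, independent i.i.d. sequences $(c^m)_{m\in\mathbb{Z}}\sim\alpha$, $(s^n)_{n\in\mathbb{Z}}\sim\beta$ with positive probabilities. Notation: $\mathcal{C}(S)$ = customer types compatible with some type in $S$; $\mathcal{U}(S)=\mathcal{C}\setminus\mathcal{C}(\mathcal{S}\setminus S)$; $\alpha_C=\sum_{c\in C}\alpha_c$, $\beta_S=\sum_{s\in S}\beta_s$. Complete resource pooling: $\beta_S>\alpha_{\mathcal{U}(S)}$ for all nonempty proper $S\subsetneq\mathcal{S}$. $A$ is the a.s. unique (perfect) FCFS matching over $\mathbb{Z}$ (for each $(m,n)\in A$, every compatible $s^l$, $l<n$, is matched to some $c^k$, $k<m$, and every compatible $c^k$, $k<m$, to some $s^l$, $l<n$); for $(m,n)\in A$, $\tilde{s}^m=s^n$. At time $N$ customer-line position $m$ holds $\tilde{s}^m$ if $c^m$ is matched to a server of index $\le N$ (''exchanged server'') and $c^m$ otherwise (''unmatched customer''). $\underline{M}$ = first position with an unmatched customer, $\overline{M}$ = last position with an exchanged server, $\underline{N}$ = largest $p\le\overline{M}$ such that positions $p,\ldots,\overline{M}$ contain exchanged servers of all $J$ types.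 $\mathcal{Z}_N$ is the word in positions $\underline{N},\ldots,\overline{M}$; it has stationary distribution $\pi_{\mathcal{Z}}(\mathfrak{z})=B\prod_i\alpha_{c_i}^{\#c_i}\prod_j\beta_{s_j}^{\#s_j}$ for a constant $B>0$ (counts of types in $\mathfrak{z}$). Write $\mathcal{Z}_N=(S_1,\mathfrak{w}_1,S_2,\ldots,\mathfrak{w}_{J-1},S_J)$: $S_J$ is the type of the last entry $\tilde{s}^{\overline{M}}$, and recursively, for $j<J$, $S_j$ is the type of the last exchanged server in the word whose type differs from $S_{j+1},\ldots,S_J$; $\mathfrak{w}_\ell$ is the subword strictly between the occurrences of $S_\ell$ and $S_{\ell+1}$. $W_N=(S_1,w_1,\ldots,w_{J-1},S_J)$ where $w_\ell$ replaces each unmatched customer of $\mathfrak{w}_\ell$ by $0$ and each exchanged server by $1$; $\#0(w)$, $\#1(w)$ count zeros and ones. $X_N=(S_1,n_1,\ldots,n_{J-1},S_J)$ with $n_\ell=\#0(w_\ell)$; $Y_N=(S_1,m_1,\ldots,m_{J-1},S_J)$ with $m_\ell=\#1(w_\ell)$; $U_N=(S_1,n_1,m_1,\ldots,n_{J-1},m_{J-1},S_J)$; $V_N=(S_1,n_1+m_1,\ldots,n_{J-1}+m_{J-1},S_J)$; $R_N=(S_1,\ldots,S_J)$. *)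

From Stdlib Require Import Reals List Arith Permutation Relations Binomial.
Import ListNotations.
Open Scope R_scope.

(* Customer types are c_i, i < I (encoded by i); server types are s_j, j < J
   (encoded by j).  The compatibility graph is given by E : nat -> nat -> bool,
   E i j = true iff (c_i, s_j) is an edge. *)

Definition sumR (l : list R) : R := fold_right Rplus 0 l.
Definition prodR (l : list R) : R := fold_right Rmult 1 l.

Definition memb (j : nat) (S : list nat) : bool := existsb (Nat.eqb j) S.

Definition Cb (E : nat -> nat -> bool) (S : list nat) (i : nat) : bool :=
  existsb (fun j => E i j) S.

(* U(S) = C \ C(S \ S): customer types compatible with no server type outside S *)
Definition Ub (E : nat -> nat -> bool) (J : nat) (S : list nat) (i : nat) : bool :=
  negb (existsb (fun j => andb (E i j) (negb (memb j S))) (seq 0 J)).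

(* alpha_C for a (boolean) set C of customer types, beta_S for a set S of server types *)
Definition alpha_of (I : nat) (alpha : nat -> R) (P : nat -> bool) : R :=
  sumR (map (fun i => if P i then alpha i else 0) (seq 0 I)).
Definition beta_of (J : nat) (beta : nat -> R) (S : list nat) : R :=
  sumR (map (fun j => if memb j S then beta j else 0) (seq 0 J)).

Definition vertex := (nat + nat)%type. (* inl i = c_i, inr j = s_j *)

Definition adj (I J : nat) (E : nat -> nat -> bool) (u v : vertex) : Prop :=
  match u, v with
  | inl i, inr j => (i < I)%nat /\ (j < J)%nat /\ E i j = true
  | inr j, inl i => (i < I)%nat /\ (j < J)%nat /\ E i j = true
  | _, _ => False
  end.

Definition is_vertex (I J : nat) (u : vertex) : Prop :=
  match u with inl i => (i < I)%nat | inr j => (j < J)%nat end.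

Definition connected_graph (I J : nat) (E : nat -> nat -> bool) : Prop :=
  forall u v, is_vertex I J u -> is_vertex I J v ->
    clos_refl_trans vertex (adj I J E) u v.

Definition prob_vector (n : nat) (p : nat -> R) : Prop :=
  (forall k, (k < n)%nat -> 0 < p k) /\ sumR (map p (seq 0 n)) = 1.

Definition CRP (I J : nat) (E : nat -> nat -> bool) (alpha beta : nat -> R) : Prop :=
  forall S : list nat,
    (forall j, In j S -> (j < J)%nat) ->
    (exists j, In j S) ->
    (exists j, (j < J)%nat /\ ~ In j S) ->
    beta_of J beta S > alpha_of I alpha (Ub E J S).

Inductive letter : Type :=
| Cust (i : nat)   (* an unmatched customer of type c_i *)
| Serv (j : nat).  (* an exchanged server of type s_j *)

(* A word Z = (S_1, w_1, S_2, ..., w_{J-1}, S_J) is stored as the pair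
   (list [S_1;...;S_J], list [w_1;...;w_{J-1}]). *)
Definition Zstate := (list nat * list (list letter))%type.

Fixpoint interleave (p : list nat) (ws : list (list letter)) : list letter :=
  match p with
  | [] => []
  | s :: p' => match ws with
               | [] => Serv s :: interleave p' []
               | w :: ws' => Serv s :: w ++ interleave p' ws'
               end
  end.
Definition flatZ (z : Zstate) : list letter := interleave (fst z) (snd z).

(* letter allowed in subword w_l (l = k+1): an unmatched customer of a type in
   U({S_1..S_l}) or an exchanged server of a type in {S_{l+1}..S_J}. *)
Definition letter_ok (I J : nat) (E : nat -> nat -> bool) (p : list nat) (l : nat)
  (x : letter) : Prop :=
  match x with
  | Cust i => (i < I)%nat /\ Ub E J (firstn l p) i = true
  | Serv j => In j (skipn l p)
  end.

Definition valid_Z (I J : nat) (E : nat -> nat -> bool) (z : Zstate) : Prop :=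
  Permutation (fst z) (seq 0 J) /\ length (snd z) = (J - 1)%nat /\
  forall k, (k < J - 1)%nat ->
    Forall (letter_ok I J E (fst z) (S k)) (nth k (snd z) []).

Definition is_cust (i : nat) (x : letter) : bool :=
  match x with Cust i' => Nat.eqb i i' | _ => false end.
Definition is_serv (j : nat) (x : letter) : bool :=
  match x with Serv j' => Nat.eqb j j' | _ => false end.

Definition cnt (f : letter -> bool) (l : list letter) : nat := length (filter f l).

Definition piZ (I J : nat) (alpha beta : nat -> R) (B : R) (z : Zstate) : R :=
  B * prodR (map (fun i => alpha i ^ cnt (is_cust i) (flatZ z)) (seq 0 I))
    * prodR (map (fun j => beta j ^ cnt (is_serv j) (flatZ z)) (seq 0 J)).

Definition bit (x : letter) : bool := match x with Cust _ => false | Serv _ => true end.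
Definition isC (x : letter) : bool := negb (bit x).
Definition isS (x : letter) : bool := bit x.

(* binary words: false = 0 (unmatched customer), true = 1 (exchanged server) *)
Definition n0 (w : list bool) : nat := length (filter negb w).
Definition n1 (w : list bool) : nat := length (filter (fun b => b) w).

Definition Wmap (z : Zstate) : list nat * list (list bool) :=
  (fst z, map (map bit) (snd z)).
Definition Umap (z : Zstate) : list nat * list (nat * nat) :=
  (fst z, map (fun w => (cnt isC w, cnt isS w)) (snd z)).
Definition Xmap (z : Zstate) : list nat * list nat := (fst z, map (cnt isC) (snd z)).
Definition Ymap (z : Zstate) : list nat * list nat := (fst z, map (cnt isS) (snd z)).
Definition Vmap (z : Zstate) : list nat * list nat :=
  (fst z, map (fun w => (cnt isC w + cnt isS w)%nat) (snd z)).
Definition Rmap (z : Zstate) : list nat := fst z.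

Definition nn_sum_on {T : Type} (P : T -> Prop) (f : T -> R) (L : R) : Prop :=
  is_lub (fun s => exists l : list T, NoDup l /\ Forall P l /\ s = sumR (map f l)) L.

(* ---------- the quantities of the theorem (l is 1-based, p = [S_1;...;S_J]) ---------- *)
Definition prod_l (J : nat) (f : nat -> R) : R := prodR (map f (seq 1 (J - 1))).
Definition aL (I J : nat) (E : nat -> nat -> bool) (alpha : nat -> R) (p : list nat) (l : nat) : R :=
  alpha_of I alpha (Ub E J (firstn l p)).
Definition bLater (J : nat) (beta : nat -> R) (p : list nat) (l : nat) : R :=
  beta_of J beta (skipn l p).
Definition bFirst (J : nat) (beta : nat -> R) (p : list nat) (l : nat) : R :=
  beta_of J beta (firstn l p).
Definition aCLater (I : nat) (E : nat -> nat -> bool) (alpha : nat -> R) (p : list nat) (l : nat) : R :=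
  alpha_of I alpha (Cb E (skipn l p)).
Definition Bs (J : nat) (beta : nat -> R) (B : R) : R := B * prodR (map beta (seq 0 J)).

Definition piW I J E alpha beta B (p : list nat) (ws : list (list bool)) : R :=
  Bs J beta B * prod_l J (fun l =>
    aL I J E alpha p l ^ n0 (nth (l - 1) ws []) * bLater J beta p l ^ n1 (nth (l - 1) ws [])).

Definition piU I J E alpha beta B (p : list nat) (nm : list (nat * nat)) : R :=
  Bs J beta B * prod_l J (fun l =>
    let n := fst (nth (l - 1) nm (0, 0)%nat) in
    let m := snd (nth (l - 1) nm (0, 0)%nat) in
    Binomial.C (n + m) n * aL I J E alpha p l ^ n * bLater J beta p l ^ m).

Definition piX I J E alpha beta B (p : list nat) (ns : list nat) : R :=
  Bs J beta B * prod_l J (fun l =>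
    let n := nth (l - 1) ns 0%nat in
    aL I J E alpha p l ^ n / bFirst J beta p l ^ (n + 1)).

Definition piY I J E alpha beta B (p : list nat) (ms : list nat) : R :=
  Bs J beta B * prod_l J (fun l =>
    let m := nth (l - 1) ms 0%nat in
    bLater J beta p l ^ m / aCLater I E alpha p l ^ (m + 1)).

Definition piV I J E alpha beta B (p : list nat) (rs : list nat) : R :=
  Bs J beta B * prod_l J (fun l =>
    (aL I J E alpha p l + bLater J beta p l) ^ nth (l - 1) rs 0%nat).

Definition piR I J E alpha beta B (p : list nat) : R :=
  Bs J beta B * prod_l J (fun l => / (bFirst J beta p l - aL I J E alpha p l)).

(* Given the order (S_1, ..., S_J) of the last exchanged servers, a state of Z is a tuple of
   J - 1 unconstrained subwords, w_l being any word over the customers of U({S_1..S_l}) and the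
   servers of {S_(l+1)..S_J}, and pi_Z is B^s times the product of their weights.  Hence each
   lumped distribution is B^s times a product over l of generating functions in
   a = alpha_(l) and b = beta_{S_(l+1)..S_J}, a word of level l weighing a^#0 b^#1 in total:
   a fixed 0/1 pattern gives a^#0 b^#1, fixed counts a binomial coefficient, a fixed length
   (a + b)^r, and fixing only the zeros, only the ones, or nothing gives geometric series.
   These converge since a + b = 1 - (beta_{S_1..S_l} - alpha_(l)) < 1 by complete resource
   pooling and a = 1 - alpha_C({S_(l+1)..S_J}) < 1 by connectivity. *)

From Stdlib Require Import Reals List Arith Permutation Binomial Lia Lra ClassicalEpsilon Relations Bool.
Import ListNotations.
Open Scope R_scope.

Lemma sumR_app l1 l2 : sumR (l1 ++ l2) = sumR l1 + sumR l2.
Proof. induction l1 as [|x l1 IH]; simpl; [|rewrite IH]; lra. Qed.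

Lemma prodR_app l1 l2 : prodR (l1 ++ l2) = prodR l1 * prodR l2.
Proof. induction l1 as [|x l1 IH]; simpl; [|rewrite IH]; lra. Qed.

Lemma sumR_perm l1 l2 : Permutation l1 l2 -> sumR l1 = sumR l2.
Proof. induction 1; simpl; lra. Qed.

Lemma prodR_perm l1 l2 : Permutation l1 l2 -> prodR l1 = prodR l2.
Proof. induction 1; simpl; [| rewrite IHPermutation | |]; lra. Qed.

Lemma prodR_map_const1 {T} (l : list T) : prodR (map (fun _ => 1) l) = 1.
Proof. induction l as [|x l IH]; simpl; [|rewrite IH]; lra. Qed.

Lemma sumR_map_scal_l {T} (c : R) (f : T -> R) l :
  sumR (map (fun x => c * f x) l) = c * sumR (map f l).
Proof. induction l as [|x l IH]; simpl; [|rewrite IH]; lra. Qed.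

Lemma sumR_map_scal_r {T} (c : R) (f : T -> R) l :
  sumR (map (fun x => f x * c) l) = sumR (map f l) * c.
Proof. induction l as [|x l IH]; simpl; [|rewrite IH]; lra. Qed.

Lemma prodR_map_mult {T} (f g : T -> R) l :
  prodR (map (fun x => f x * g x) l) = prodR (map f l) * prodR (map g l).
Proof. induction l as [|x l IH]; simpl; [|rewrite IH]; ring. Qed.

Lemma sumR_flat_map {A T} (f : T -> R) (g : A -> list T) l :
  sumR (map f (flat_map g l)) = sumR (map (fun x => sumR (map f (g x))) l).
Proof. induction l as [|x l IH]; simpl; [lra|]. rewrite map_app, sumR_app, IH; lra. Qed.

Lemma sumR_map_filter {T} (P : T -> bool) (f : T -> R) l :
  sumR (map f (filter P l)) = sumR (map (fun x => if P x then f x else 0) l).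
Proof. induction l as [|x l IH]; simpl; [lra|]. destruct (P x); simpl; rewrite IH; lra. Qed.

Lemma sumR_map_nonneg {T} (f : T -> R) l :
  (forall x, In x l -> 0 <= f x) -> 0 <= sumR (map f l).
Proof.
  induction l as [|x l IH]; simpl; intros Hf; [lra|].
  assert (0 <= f x) by auto. assert (0 <= sumR (map f l)) by auto. lra.
Qed.

Lemma sumR_map_pos {T} (f : T -> R) l x :
  In x l -> 0 < f x -> (forall y, In y l -> 0 <= f y) -> 0 < sumR (map f l).
Proof.
  intros Hx Hfx Hf. apply in_split in Hx as [l1 [l2 ->]].
  rewrite map_app, sumR_app. simpl.
  assert (0 <= sumR (map f l1)) by (apply sumR_map_nonneg; intros; apply Hf, in_or_app; auto).
  assert (0 <= sumR (map f l2)) by (apply sumR_map_nonneg; intros; apply Hf, in_or_app; simpl; auto).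
  lra.
Qed.

Lemma prodR_map_pos {T} (f : T -> R) l :
  (forall x, In x l -> 0 < f x) -> 0 < prodR (map f l).
Proof. induction l as [|x l IH]; simpl; intros Hf; [lra|]. apply Rmult_lt_0_compat; auto. Qed.

Lemma sumR_map_incl {T} (f : T -> R) (l1 l2 : list T) :
  NoDup l1 -> incl l1 l2 -> (forall x, In x l2 -> 0 <= f x) ->
  sumR (map f l1) <= sumR (map f l2).
Proof.
  revert l2; induction l1 as [|x l1 IH]; intros l2 Hnd Hincl Hf; simpl.
  - now apply sumR_map_nonneg.
  - inversion Hnd as [|? ? Hx Hnd1]; subst.
    destruct (in_split x l2 (Hincl x (or_introl eq_refl))) as [la [lb ->]].
    assert (Hrest : sumR (map f l1) <= sumR (map f (la ++ lb))).
    { apply IH; auto.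
      - intros y Hy. destruct (in_app_or _ _ _ (Hincl y (or_intror Hy))) as [H|[<-|H]];
          [apply in_or_app; auto | contradiction | apply in_or_app; auto].
      - intros y Hy. apply Hf. apply in_app_or in Hy as [|]; apply in_or_app; simpl; auto. }
    rewrite map_app, sumR_app in *. simpl. lra.
Qed.

Lemma is_lub_iff (E E' : R -> Prop) L : (forall s, E s <-> E' s) -> is_lub E L -> is_lub E' L.
Proof.
  intros HE [Hub Hleast]. split.
  - intros s Hs. now apply Hub, HE.
  - intros M HM. apply Hleast. intros s Hs. now apply HM, HE.
Qed.

Lemma nn_sum_on_ext {T} (P P' : T -> Prop) f L :
  (forall z, P z <-> P' z) -> nn_sum_on P f L -> nn_sum_on P' f L.
Proof.
  intros HP. apply is_lub_iff. intros s.
  split; intros [l [Hnd [Hl ->]]]; exists l; repeat split; auto;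
    revert Hl; apply Forall_impl; intros z; apply HP.
Qed.

Lemma nn_sum_on_exhaustion {T} (P : T -> Prop) (f : T -> R) (L : R) (l : nat -> list T) :
  (forall x, P x -> 0 <= f x) ->
  (forall n, NoDup (l n)) -> (forall n x, In x (l n) -> P x) ->
  (forall x, P x -> exists n, In x (l n)) ->
  (forall n, incl (l n) (l (S n))) ->
  Un_cv (fun n => sumR (map f (l n))) L -> nn_sum_on P f L.
Proof.
  intros Hf Hnd HP Hcover Hstep Hcv.
  assert (Hmono : forall n m, (n <= m)%nat -> incl (l n) (l m)).
  { intros n m Hnm. induction Hnm; [apply incl_refl | eapply incl_tran; eauto]. }
  assert (Hsum_le : forall l0 n, NoDup l0 -> incl l0 (l n) -> sumR (map f l0) <= sumR (map f (l n))).
  { intros l0 n Hnd0 Hincl. apply sumR_map_incl; auto. intros x Hx. apply Hf. eapply HP; eauto. }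
  assert (Hgrow : Un_growing (fun n => sumR (map f (l n)))).
  { intros n. apply Hsum_le; auto. }
  split.
  - intros s [l0 [Hnd0 [Hl0 ->]]].
    assert (Hbig : exists N, incl l0 (l N)).
    { clear Hnd0. induction l0 as [|x l0 IH].
      - exists 0%nat. intros y [].
      - inversion Hl0 as [|? ? Hx Hl1]; subst.
        destruct (IH Hl1) as [N HN]. destruct (Hcover x Hx) as [n Hn].
        exists (Nat.max N n). intros y [<-|Hy].
        + apply (Hmono n); [lia | auto].
        + apply (Hmono N); [lia | auto]. }
    destruct Hbig as [N HN].
    apply Rle_trans with (sumR (map f (l N))); [now apply Hsum_le|].
    exact (growing_ineq _ _ Hgrow Hcv N).
  - intros M HM.
    assert (Hbound : forall n, sumR (map f (l n)) <= M).
    { intros n. apply HM. exists (l n). repeat split; auto.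
      apply Forall_forall. intros x Hx. eapply HP; eauto. }
    destruct (Rle_dec L M) as [|HLM]; auto. exfalso.
    destruct (Hcv (L - M)) as [N HN]; [lra|].
    specialize (HN N (le_n _)). specialize (Hbound N). unfold R_dist in HN.
    apply Rabs_def2 in HN. lra.
Qed.

Lemma Un_cv_const (c : R) : Un_cv (fun _ => c) c.
Proof. intros eps Heps. exists 0%nat. intros. unfold R_dist. rewrite Rminus_diag, Rabs_R0. lra. Qed.

Lemma Un_cv_eventually_const (u : nat -> R) (t : R) (N : nat) :
  (forall k, (N <= k)%nat -> u k = t) -> Un_cv u t.
Proof.
  intros Hu eps Heps. exists N. intros n Hn. rewrite Hu by lia.
  unfold R_dist. rewrite Rminus_diag, Rabs_R0. lra.
Qed.

Lemma Un_cv_prodR {A} (l : list A) (u : A -> nat -> R) (t : A -> R) :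
  (forall x, In x l -> Un_cv (u x) (t x)) ->
  Un_cv (fun k => prodR (map (fun x => u x k) l)) (prodR (map t l)).
Proof.
  induction l as [|x l IH]; simpl; intros Hu; [apply Un_cv_const|].
  apply CV_mult; auto.
Qed.

(* The error [u k - t] is multiplied by [d] at each step, up to the perturbation [e k - l]. *)
Lemma Un_cv_affine_rec (u e : nat -> R) (c d l t : R) :
  0 <= d < 1 -> (forall k, u (S k) = c + d * u k + e k) -> Un_cv e l ->
  t = c + d * t + l -> Un_cv u t.
Proof.
  intros Hd Hrec He Ht eps Heps.
  destruct (He (eps * (1 - d) / 2)) as [N0 HN0].
  { apply Rmult_lt_0_compat; [apply Rmult_lt_0_compat|]; lra. }
  set (v0 := Rabs (u N0 - t)).
  assert (Herr : forall m, Rabs (u (m + N0)%nat - t) <= d ^ m * v0 + eps / 2).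
  { induction m as [|m IH]; simpl.
    - unfold v0. lra.
    - rewrite Hrec.
      replace (c + d * u (m + N0)%nat + e (m + N0)%nat - t)
        with (d * (u (m + N0)%nat - t) + (e (m + N0)%nat - l)) by lra.
      assert (Hem : R_dist (e (m + N0)%nat) l < eps * (1 - d) / 2) by (apply HN0; lia).
      unfold R_dist in Hem.
      pose proof (Rabs_triang (d * (u (m + N0)%nat - t)) (e (m + N0)%nat - l)).
      rewrite Rabs_mult, (Rabs_right d) in * by lra.
      pose proof (Rmult_le_compat_l d _ _ (proj1 Hd) IH). nra. }
  destruct (pow_lt_1_zero d ltac:(rewrite Rabs_right; lra) (eps / (2 * (v0 + 1))))
    as [M HM].
  { assert (0 <= v0) by apply Rabs_pos. apply Rdiv_lt_0_compat; lra. }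
  exists (M + N0)%nat. intros n Hn.
  replace n with ((n - N0) + N0)%nat by lia.
  specialize (HM (n - N0)%nat ltac:(lia)). unfold R_dist.
  assert (Hv0 : 0 <= v0) by apply Rabs_pos.
  assert (Hdm : 0 <= d ^ (n - N0)) by (apply pow_le; lra).
  rewrite Rabs_right in HM by lra.
  assert (d ^ (n - N0) * (v0 + 1) < eps / 2).
  { apply (Rmult_lt_compat_r (v0 + 1)) in HM; [|lra].
    replace (eps / (2 * (v0 + 1)) * (v0 + 1)) with (eps / 2) in HM by (field; lra). lra. }
  pose proof (Herr (n - N0)%nat). nra.
Qed.

Definition decb (P : Prop) : bool := if excluded_middle_informative P then true else false.
Definition indP (P : Prop) : R := if decb P then 1 else 0.

Lemma decb_spec (P : Prop) : decb P = true <-> P.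
Proof. unfold decb. destruct excluded_middle_informative; split; auto; discriminate. Qed.

Lemma indP_ext (P P' : Prop) : (P <-> P') -> indP P = indP P'.
Proof.
  intros HP. unfold indP, decb.
  destruct (excluded_middle_informative P), (excluded_middle_informative P'); tauto.
Qed.

Lemma indP_true (P : Prop) : P -> indP P = 1.
Proof. intros HP. unfold indP. now rewrite (proj2 (decb_spec P) HP). Qed.

Lemma indP_false (P : Prop) : ~ P -> indP P = 0.
Proof.
  intros HP. unfold indP. destruct (decb P) eqn:H; auto.
  exfalso. now apply HP, decb_spec.
Qed.

(* [bitsum a b n Q] is the sum of [a ^ n0 w * b ^ n1 w] over the binary words [w] of
   length at most [n] satisfying [Q]: the truncated generating function of [Q]. *)
Fixpoint bitsum (a b : R) (n : nat) (Q : list bool -> Prop) : R :=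
  match n with
  | O => indP (Q [])
  | S n => indP (Q []) + a * bitsum a b n (fun w => Q (false :: w))
                       + b * bitsum a b n (fun w => Q (true :: w))
  end.

Lemma bitsum_ext a b n : forall Q Q', (forall w, Q w <-> Q' w) -> bitsum a b n Q = bitsum a b n Q'.
Proof.
  induction n as [|n IH]; intros Q Q' HQ; simpl; rewrite (indP_ext _ _ (HQ [])); auto.
  rewrite (IH (fun w => Q (false :: w)) (fun w => Q' (false :: w))),
    (IH (fun w => Q (true :: w)) (fun w => Q' (true :: w))) by (intros; apply HQ).
  reflexivity.
Qed.

Lemma bitsum_empty a b n : forall Q, (forall w, ~ Q w) -> bitsum a b n Q = 0.
Proof.
  induction n as [|n IH]; intros Q HQ; simpl; rewrite indP_false by apply HQ; [lra|].
  rewrite !IH by (intros w; apply HQ). lra.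
Qed.

Lemma bitsum_swap a b n : forall Q, bitsum a b n Q = bitsum b a n (fun w => Q (map negb w)).
Proof. induction n as [|n IH]; intros Q; simpl; [|rewrite !IH; simpl]; lra. Qed.

Lemma n0_false w : n0 (false :: w) = S (n0 w).
Proof. reflexivity. Qed.
Lemma n0_true w : n0 (true :: w) = n0 w.
Proof. reflexivity. Qed.
Lemma n1_false w : n1 (false :: w) = n1 w.
Proof. reflexivity. Qed.
Lemma n1_true w : n1 (true :: w) = S (n1 w).
Proof. reflexivity. Qed.

Lemma n0_map_negb w : n0 (map negb w) = n1 w.
Proof. unfold n0, n1. induction w as [|[] w IH]; simpl; congruence. Qed.

Lemma bitsum_word a b ws : forall n, (length ws <= n)%nat ->
  bitsum a b n (fun w => w = ws) = a ^ n0 ws * b ^ n1 ws.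
Proof.
  induction ws as [|c ws IH]; intros [|n] Hn; simpl in Hn |- *; try lia.
  - rewrite indP_true by reflexivity. simpl. lra.
  - rewrite indP_true by reflexivity.
    rewrite !bitsum_empty by congruence. simpl. lra.
  - rewrite indP_false by congruence.
    destruct c.
    + rewrite (bitsum_empty _ _ _ (fun w => false :: w = true :: ws)) by congruence.
      rewrite (bitsum_ext _ _ _ (fun w => true :: w = true :: ws) (fun w => w = ws))
        by (intros; split; congruence).
      rewrite IH by lia. rewrite n0_true, n1_true. simpl. ring.
    + rewrite (bitsum_empty _ _ _ (fun w => true :: w = false :: ws)) by congruence.
      rewrite (bitsum_ext _ _ _ (fun w => false :: w = false :: ws) (fun w => w = ws))
        by (intros; split; congruence).
      rewrite IH by lia. rewrite n0_false, n1_false. simpl. ring.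
Qed.

Lemma C_n_0 n : C n 0 = 1.
Proof. unfold C. rewrite Nat.sub_0_r. simpl. field. apply INR_fact_neq_0. Qed.

Lemma C_n_n n : C n n = 1.
Proof. unfold C. rewrite Nat.sub_diag. simpl. field. apply INR_fact_neq_0. Qed.

Lemma bitsum_count a b N : forall n m k, (n + m = N)%nat -> (N <= k)%nat ->
  bitsum a b k (fun w => (n0 w, n1 w) = (n, m)) = C (n + m) n * a ^ n * b ^ m.
Proof.
  induction N as [|N IH]; intros n m [|k] Hnm Hk; try lia; simpl.
  - replace n with 0%nat by lia. replace m with 0%nat by lia.
    rewrite indP_true by reflexivity. rewrite C_n_0. simpl. lra.
  - replace n with 0%nat by lia. replace m with 0%nat by lia.
    rewrite indP_true by reflexivity. rewrite C_n_0.
    rewrite !bitsum_empty by (intros w; rewrite ?n0_false, ?n1_true; congruence). simpl. lra.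
  - change (n0 []) with 0%nat. change (n1 []) with 0%nat.
    rewrite indP_false by (intros H; injection H; lia).
    destruct n as [|n], m as [|m]; try lia.
    + rewrite (bitsum_empty _ _ _ (fun w => (n0 (false :: w), n1 (false :: w)) = (0%nat, S m)))
        by (intros w; rewrite n0_false; congruence).
      rewrite (bitsum_ext _ _ _ _ (fun w => (n0 w, n1 w) = (0%nat, m)))
        by (intros w; rewrite n0_true, n1_true; split; congruence).
      rewrite IH, !C_n_0 by lia. simpl. ring.
    + rewrite (bitsum_empty _ _ _ (fun w => (n0 (true :: w), n1 (true :: w)) = (S n, 0%nat)))
        by (intros w; rewrite n1_true; congruence).
      rewrite (bitsum_ext _ _ _ _ (fun w => (n0 w, n1 w) = (n, 0%nat)))
        by (intros w; rewrite n0_false, n1_false; split; congruence).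
      rewrite IH by lia. rewrite !Nat.add_0_r, !C_n_n. simpl. ring.
    + rewrite (bitsum_ext _ _ _ (fun w => (n0 (false :: w), n1 (false :: w)) = (S n, S m))
                 (fun w => (n0 w, n1 w) = (n, S m)))
        by (intros w; rewrite n0_false, n1_false; split; congruence).
      rewrite (bitsum_ext _ _ _ (fun w => (n0 (true :: w), n1 (true :: w)) = (S n, S m))
                 (fun w => (n0 w, n1 w) = (S n, m)))
        by (intros w; rewrite n0_true, n1_true; split; congruence).
      rewrite !IH by lia.
      replace (S n + S m)%nat with (S (n + S m)) by lia.
      rewrite <- pascal by lia.
      replace (S n + m)%nat with (n + S m)%nat by lia.
      simpl. ring.
Qed.

Lemma bitsum_length a b r : forall k, (r <= k)%nat ->
  bitsum a b k (fun w => (n0 w + n1 w)%nat = r) = (a + b) ^ r.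
Proof.
  induction r as [|r IH]; intros [|k] Hk; try lia; simpl.
  - rewrite indP_true by reflexivity. lra.
  - rewrite indP_true by reflexivity.
    rewrite !bitsum_empty by (intros w; rewrite ?n0_false, ?n1_true; lia). lra.
  - rewrite indP_false by (unfold n0, n1; simpl; lia).
    rewrite (bitsum_ext _ _ _ (fun w => (n0 (false :: w) + n1 (false :: w))%nat = S r)
               (fun w => (n0 w + n1 w)%nat = r)) by (intros w; rewrite n0_false, n1_false; lia).
    rewrite (bitsum_ext _ _ _ (fun w => (n0 (true :: w) + n1 (true :: w))%nat = S r)
               (fun w => (n0 w + n1 w)%nat = r)) by (intros w; rewrite n0_true, n1_true; lia).
    rewrite IH by lia. ring.
Qed.

Lemma bitsum_n0_rec0 a b k :
  bitsum a b (S k) (fun w => n0 w = 0%nat) = 1 + b * bitsum a b k (fun w => n0 w = 0%nat) + 0.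
Proof.
  simpl. rewrite indP_true by reflexivity.
  rewrite (bitsum_empty _ _ _ (fun w => n0 (false :: w) = 0%nat)) by (intros w; rewrite n0_false; lia).
  rewrite (bitsum_ext _ _ _ (fun w => n0 (true :: w) = 0%nat) (fun w => n0 w = 0%nat))
    by (intros w; rewrite n0_true; tauto).
  ring.
Qed.

Lemma bitsum_n0_recS a b k n :
  bitsum a b (S k) (fun w => n0 w = S n) =
  0 + b * bitsum a b k (fun w => n0 w = S n) + a * bitsum a b k (fun w => n0 w = n).
Proof.
  simpl. rewrite indP_false by (unfold n0, n1; simpl; lia).
  rewrite (bitsum_ext _ _ _ (fun w => n0 (false :: w) = S n) (fun w => n0 w = n))
    by (intros w; rewrite n0_false; lia).
  rewrite (bitsum_ext _ _ _ (fun w => n0 (true :: w) = S n) (fun w => n0 w = S n))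
    by (intros w; rewrite n0_true; tauto).
  ring.
Qed.

(* With [n] zeros fixed, the ones form a geometric series in each of the [n + 1] gaps. *)
Lemma bitsum_n0_cv a b n : 0 <= b < 1 ->
  Un_cv (fun k => bitsum a b k (fun w => n0 w = n)) (a ^ n / (1 - b) ^ S n).
Proof.
  intros Hb. assert (1 - b <> 0) by lra.
  induction n as [|n IH].
  - apply (Un_cv_affine_rec _ (fun _ => 0) 1 b 0); auto using Un_cv_const, bitsum_n0_rec0.
    simpl. field. auto.
  - apply (Un_cv_affine_rec _ (fun k => a * bitsum a b k (fun w => n0 w = n)) 0 b
             (a * (a ^ n / (1 - b) ^ S n))); auto using bitsum_n0_recS.
    + apply CV_mult; auto using Un_cv_const.
    + assert ((1 - b) ^ n <> 0) by (apply pow_nonzero; auto). simpl. field. auto.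
Qed.

Lemma bitsum_n1_cv a b m : 0 <= a < 1 ->
  Un_cv (fun k => bitsum a b k (fun w => n1 w = m)) (b ^ m / (1 - a) ^ S m).
Proof.
  intros Ha. apply (Un_cv_ext (fun k => bitsum b a k (fun w => n0 w = m))).
  - intros k. rewrite bitsum_swap. apply bitsum_ext. intros w.
    now rewrite n0_map_negb.
  - now apply bitsum_n0_cv.
Qed.

Lemma bitsum_all_cv a b : 0 <= a + b < 1 ->
  Un_cv (fun k => bitsum a b k (fun _ => True)) (/ (1 - a - b)).
Proof.
  intros Hab.
  apply (Un_cv_affine_rec _ (fun _ => 0) 1 (a + b) 0); auto using Un_cv_const.
  - intros k. simpl. rewrite indP_true by auto. ring.
  - field. lra.
Qed.

Lemma NoDup_flat_map_cons {A} (l : list A) (L : list (list A)) :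
  NoDup l -> NoDup L -> NoDup (flat_map (fun x => map (cons x) L) l).
Proof.
  induction l as [|x l IH]; intros Hl HL; simpl; [constructor|].
  inversion Hl as [|? ? Hx Hl']; subst. apply NoDup_app; auto.
  - apply FinFun.Injective_map_NoDup; auto. intros u v H. now injection H.
  - intros w Hw Hw'. apply in_map_iff in Hw as [u [<- _]].
    apply in_flat_map in Hw' as [y [Hy Hy']]. apply in_map_iff in Hy' as [v [Hv _]].
    injection Hv as ->. contradiction.
Qed.

Fixpoint words_le {A} (alph : list A) (k : nat) : list (list A) :=
  match k with
  | O => [[]]
  | S k => [] :: flat_map (fun x => map (cons x) (words_le alph k)) alph
  end.

Lemma in_words_le {A} (alph : list A) k w :
  In w (words_le alph k) <-> (length w <= k)%nat /\ incl w alph.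
Proof.
  revert w; induction k as [|k IH]; intros w; simpl; split.
  - intros [<-|[]]. split; [simpl; lia | apply incl_nil_l].
  - intros [Hw _]. destruct w; simpl in Hw; [auto | lia].
  - intros [<-|Hw]; [split; [simpl; lia | apply incl_nil_l]|].
    apply in_flat_map in Hw as [x [Hx Hw]]. apply in_map_iff in Hw as [v [<- Hv]].
    apply IH in Hv as [Hlen Hincl]. split; [simpl; lia | now apply incl_cons].
  - intros [Hlen Hincl]. destruct w as [|x w]; [auto | right].
    apply incl_cons_inv in Hincl as [Hx Hincl].
    apply in_flat_map. exists x. split; auto.
    apply in_map, IH. simpl in Hlen. split; [lia | auto].
Qed.

Lemma NoDup_words_le {A} (alph : list A) k : NoDup alph -> NoDup (words_le alph k).
Proof.
  intros Halph. induction k as [|k IH]; simpl; [now repeat constructor|].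
  constructor; [|now apply NoDup_flat_map_cons].
  intros Hin. apply in_flat_map in Hin as [x [_ Hx]].
  apply in_map_iff in Hx as [v [Hv _]]. discriminate.
Qed.

Fixpoint cartesian {A} (Ls : list (list A)) : list (list A) :=
  match Ls with
  | [] => [[]]
  | L :: Ls => flat_map (fun x => map (cons x) (cartesian Ls)) L
  end.

Lemma in_cartesian {A} (Ls : list (list A)) xs : In xs (cartesian Ls) <-> Forall2 (@In A) xs Ls.
Proof.
  revert xs; induction Ls as [|L Ls IH]; intros xs; simpl; split.
  - intros [<-|[]]. constructor.
  - intros H. inversion H. auto.
  - intros H. apply in_flat_map in H as [x [Hx H]]. apply in_map_iff in H as [v [<- Hv]].
    constructor; auto. now apply IH.
  - intros H. inversion H as [|x ? ? ? Hx Hrest]; subst.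
    apply in_flat_map. exists x. split; auto. apply in_map, IH; auto.
Qed.

Lemma NoDup_cartesian {A} (Ls : list (list A)) : Forall (@NoDup A) Ls -> NoDup (cartesian Ls).
Proof.
  induction Ls as [|L Ls IH]; simpl; intros H; [now repeat constructor|].
  inversion H; subst. apply NoDup_flat_map_cons; auto.
Qed.

Lemma sumR_prodR_cartesian {A} (g : A -> R) (Ls : list (list A)) :
  sumR (map (fun xs => prodR (map g xs)) (cartesian Ls)) = prodR (map (fun L => sumR (map g L)) Ls).
Proof.
  induction Ls as [|L Ls IH]; simpl; [lra|].
  rewrite sumR_flat_map, <- sumR_map_scal_r. f_equal. apply map_ext. intros x.
  rewrite map_map. simpl. now rewrite sumR_map_scal_l, IH.
Qed.

Definition letter_weight (alpha beta : nat -> R) (x : letter) : R :=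
  match x with Cust i => alpha i | Serv j => beta j end.
Definition word_weight (alpha beta : nat -> R) (w : list letter) : R :=
  prodR (map (letter_weight alpha beta) w).

Lemma sumR_words_bitsum alpha beta (CL SL : list letter) a b :
  (forall x, In x CL -> bit x = false) -> (forall x, In x SL -> bit x = true) ->
  sumR (map (letter_weight alpha beta) CL) = a -> sumR (map (letter_weight alpha beta) SL) = b ->
  forall k Q, sumR (map (word_weight alpha beta)
                     (filter (fun w => decb (Q (map bit w))) (words_le (CL ++ SL) k)))
              = bitsum a b k Q.
Proof.
  intros HC HS Ha Hb k. induction k as [|k IH]; intros Q; rewrite sumR_map_filter; simpl.
  - unfold indP, word_weight. simpl. lra.
  - rewrite sumR_flat_map, map_app, sumR_app.
    assert (Hx : forall x,
               sumR (map (fun w => if decb (Q (map bit w)) then word_weight alpha beta w else 0)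
                                    (map (cons x) (words_le (CL ++ SL) k)))
                 = letter_weight alpha beta x * bitsum a b k (fun w => Q (bit x :: w))).
    { intros x. rewrite <- IH, sumR_map_filter, map_map, <- sumR_map_scal_l.
      f_equal. apply map_ext. intros w. simpl.
      destruct decb; unfold word_weight; simpl; lra. }
    rewrite (map_ext_in _
               (fun x => letter_weight alpha beta x * bitsum a b k (fun w => Q (false :: w))) CL)
      by (intros x Hin; now rewrite Hx, HC).
    rewrite (map_ext_in _
               (fun x => letter_weight alpha beta x * bitsum a b k (fun w => Q (true :: w))) SL)
      by (intros x Hin; now rewrite Hx, HS).
    rewrite !sumR_map_scal_r, Ha, Hb. unfold indP, word_weight. simpl. lra.
Qed.

Lemma memb_In j S : memb j S = true <-> In j S.
Proof.
  unfold memb. rewrite existsb_exists. split.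
  - intros [x [Hx Hj]]. apply Nat.eqb_eq in Hj. now subst.
  - intros Hj. exists j. split; auto. apply Nat.eqb_refl.
Qed.

Lemma In_firstn_In {A} n (l : list A) x : In x (firstn n l) -> In x l.
Proof. intros H. rewrite <- (firstn_skipn n l). apply in_or_app; auto. Qed.

Lemma In_skipn_In {A} n (l : list A) x : In x (skipn n l) -> In x l.
Proof. intros H. rewrite <- (firstn_skipn n l). apply in_or_app; auto. Qed.

Lemma NoDup_firstn_skipn_disjoint {A} n (l : list A) x :
  NoDup l -> In x (firstn n l) -> ~ In x (skipn n l).
Proof.
  rewrite <- (firstn_skipn n l) at 1. generalize (firstn n l) (skipn n l).
  intros l1 l2 Hnd Hx1 Hx2. apply in_split in Hx1 as [la [lb ->]].
  rewrite <- app_assoc in Hnd. apply NoDup_remove_2 in Hnd. apply Hnd, in_or_app. right.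
  apply in_or_app. now right.
Qed.

Lemma beta_of_eq J beta S : NoDup S -> (forall j, In j S -> (j < J)%nat) ->
  beta_of J beta S = sumR (map beta S).
Proof.
  intros Hnd HS. unfold beta_of.
  rewrite <- (sumR_map_filter (fun j => memb j S)).
  apply sumR_perm, Permutation_map, NoDup_Permutation; [apply NoDup_filter, seq_NoDup | auto |].
  intros j. rewrite filter_In, in_seq, memb_In. split; [tauto|].
  intros Hj. specialize (HS j Hj). split; [lia | auto].
Qed.

Lemma alpha_of_filter I alpha P : alpha_of I alpha P = sumR (map alpha (filter P (seq 0 I))).
Proof. unfold alpha_of. now rewrite sumR_map_filter. Qed.

Lemma alpha_of_nonneg I alpha P : prob_vector I alpha -> 0 <= alpha_of I alpha P.
Proof.
  intros [Hpos _]. rewrite alpha_of_filter. apply sumR_map_nonneg.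
  intros i Hi. apply filter_In in Hi as [Hi _]. apply in_seq in Hi. apply Rlt_le, Hpos. lia.
Qed.

Lemma server_has_neighbour I J E j : (0 < I)%nat -> connected_graph I J E -> (j < J)%nat ->
  exists i, (i < I)%nat /\ E i j = true.
Proof.
  intros HI Hconn Hj. pose proof (Hconn (inr j) (inl 0%nat) Hj HI) as Hpath.
  apply clos_rt_rt1n in Hpath.
  assert (Hstep : exists v, adj I J E (inr j) v) by (inversion Hpath; eauto).
  destruct Hstep as [[i|j'] Hadj]; simpl in Hadj; [exists i; tauto | contradiction].
Qed.

Section Levels.

Variables (I J : nat) (E : nat -> nat -> bool) (alpha beta : nat -> R) (p : list nat).
Hypothesis Hp : Permutation p (seq 0 J).

Lemma In_perm_seq j : In j p <-> (j < J)%nat.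
Proof.
  split; intros Hj.
  - apply (Permutation_in _ Hp), in_seq in Hj. lia.
  - apply (Permutation_in _ (Permutation_sym Hp)), in_seq. lia.
Qed.

Lemma NoDup_perm_seq : NoDup p.
Proof. exact (Permutation_NoDup (Permutation_sym Hp) (seq_NoDup J 0)). Qed.

Lemma length_perm_seq : length p = J.
Proof. now rewrite (Permutation_length Hp), length_seq. Qed.

Lemma bFirst_eq l : bFirst J beta p l = sumR (map beta (firstn l p)).
Proof.
  apply beta_of_eq.
  - apply (NoDup_app_remove_r _ (skipn l p)). rewrite firstn_skipn. apply NoDup_perm_seq.
  - intros j Hj. now apply In_perm_seq, (In_firstn_In l).
Qed.

Lemma bLater_eq l : bLater J beta p l = sumR (map beta (skipn l p)).
Proof.
  apply beta_of_eq.
  - apply (NoDup_app_remove_l (firstn l p)). rewrite firstn_skipn. apply NoDup_perm_seq.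
  - intros j Hj. now apply In_perm_seq, (In_skipn_In l).
Qed.

Lemma bFirst_add_bLater l : prob_vector J beta -> bFirst J beta p l + bLater J beta p l = 1.
Proof.
  intros [_ Hsum]. rewrite bFirst_eq, bLater_eq, <- sumR_app, <- map_app, firstn_skipn.
  now rewrite (sumR_perm _ _ (Permutation_map _ Hp)).
Qed.

Lemma bLater_nonneg l : prob_vector J beta -> 0 <= bLater J beta p l.
Proof.
  intros [Hpos _]. rewrite bLater_eq. apply sumR_map_nonneg.
  intros j Hj. now apply Rlt_le, Hpos, In_perm_seq, (In_skipn_In l).
Qed.

Lemma Cb_skipn_Ub_firstn l i : Cb E (skipn l p) i = negb (Ub E J (firstn l p) i).
Proof.
  unfold Cb, Ub. rewrite negb_involutive. apply eq_true_iff_eq. rewrite !existsb_exists. split.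
  - intros [j [Hj HE]]. exists j. split.
    + apply in_seq. enough (j < J)%nat by lia. now apply In_perm_seq, (In_skipn_In l).
    + rewrite HE. simpl. destruct (memb j (firstn l p)) eqn:Hm; auto.
      apply memb_In in Hm. exfalso. exact (NoDup_firstn_skipn_disjoint _ _ _ NoDup_perm_seq Hm Hj).
  - intros [j [Hj HE]]. apply andb_prop in HE as [HE Hm]. exists j. split; auto.
    apply in_seq in Hj. assert (Hjp : In j p) by (apply In_perm_seq; lia).
    rewrite <- (firstn_skipn l p) in Hjp. apply in_app_or in Hjp as [Hjp|Hjp]; auto.
    apply memb_In in Hjp. rewrite Hjp in Hm. discriminate.
Qed.

Lemma aCLater_eq l : prob_vector I alpha -> aCLater I E alpha p l = 1 - aL I J E alpha p l.
Proof.
  intros [_ Hsum]. unfold aCLater, aL, alpha_of.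
  rewrite (map_ext _ (fun i => alpha i - (if Ub E J (firstn l p) i then alpha i else 0)))
    by (intros i; rewrite Cb_skipn_Ub_firstn; destruct Ub; simpl; lra).
  rewrite <- Hsum. clear Hsum. induction (seq 0 I) as [|i s IH]; simpl; lra.
Qed.

Lemma aCLater_pos l : (0 < I)%nat -> connected_graph I J E -> prob_vector I alpha -> (l < J)%nat ->
  0 < aCLater I E alpha p l.
Proof.
  intros HI Hconn Halpha Hl.
  destruct (skipn l p) as [|j r] eqn:Hs.
  { apply (f_equal (@length nat)) in Hs. rewrite length_skipn, length_perm_seq in Hs. simpl in Hs. lia. }
  assert (Hj : (j < J)%nat) by (apply In_perm_seq, (In_skipn_In l); rewrite Hs; now left).
  destruct (server_has_neighbour I J E j HI Hconn Hj) as [i [Hi HE]].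
  unfold aCLater. rewrite alpha_of_filter, Hs.
  apply (sumR_map_pos _ _ i).
  - apply filter_In. split; [apply in_seq; lia|]. simpl. now rewrite HE.
  - apply (proj1 Halpha); auto.
  - intros y Hy. apply filter_In in Hy as [Hy _]. apply in_seq in Hy. apply Rlt_le, (proj1 Halpha). lia.
Qed.

Lemma bFirst_gt_aL k : CRP I J E alpha beta -> (k < J - 1)%nat ->
  bFirst J beta p (S k) > aL I J E alpha p (S k).
Proof.
  intros Hcrp Hk. pose proof length_perm_seq as Hlen. apply Hcrp.
  - intros j Hj. now apply In_perm_seq, (In_firstn_In (S k)).
  - destruct p as [|s p']; simpl in Hlen; [lia|]. exists s. now left.
  - destruct (skipn (S k) p) as [|j r] eqn:Hs.
    + apply (f_equal (@length nat)) in Hs. rewrite length_skipn in Hs. simpl in Hs. lia.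
    + assert (Hj : In j (skipn (S k) p)) by (rewrite Hs; now left).
      exists j. split; [now apply In_perm_seq, (In_skipn_In (S k))|].
      intros Hj'. exact (NoDup_firstn_skipn_disjoint _ _ _ NoDup_perm_seq Hj' Hj).
Qed.

End Levels.

Definition letter_in_range (I J : nat) (x : letter) : Prop :=
  match x with Cust i => (i < I)%nat | Serv j => (j < J)%nat end.

Lemma prodR_delta (f : nat -> R) i0 n :
  prodR (map (fun i => if Nat.eqb i i0 then f i else 1) (seq 0 n)) = if Nat.ltb i0 n then f i0 else 1.
Proof.
  induction n as [|n IH]; [reflexivity|].
  rewrite seq_S, map_app, prodR_app, IH. simpl.
  destruct (Nat.eqb_spec n i0) as [Heq|Hne], (Nat.ltb_spec i0 n), (Nat.ltb_spec i0 (S n));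
    try lia; try subst; ring.
Qed.

(* The product form of [piZ] only depends on the letters of the word, not on their order. *)
Lemma prodR_pow_counts I J alpha beta F : Forall (letter_in_range I J) F ->
  prodR (map (fun i => alpha i ^ cnt (is_cust i) F) (seq 0 I)) *
  prodR (map (fun j => beta j ^ cnt (is_serv j) F) (seq 0 J)) = word_weight alpha beta F.
Proof.
  induction F as [|x F IH]; intros HF; unfold word_weight in *; simpl.
  - unfold cnt. simpl. rewrite !prodR_map_const1. lra.
  - inversion HF as [|? ? Hx HF']; subst. rewrite <- IH by auto.
    destruct x as [i0|j0]; simpl in Hx |- *; unfold cnt; simpl.
    + rewrite (map_ext (fun i => alpha i ^ length (if Nat.eqb i i0 then _ else _)) 
                 (fun i => (if Nat.eqb i i0 then alpha i else 1) * alpha i ^ cnt (is_cust i) F))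
        by (intros i; unfold cnt; destruct (Nat.eqb i i0); simpl; ring).
      rewrite prodR_map_mult, prodR_delta. destruct (Nat.ltb_spec i0 I); [unfold cnt; ring | lia].
    + rewrite (map_ext (fun j => beta j ^ length (if Nat.eqb j j0 then _ else _))
                 (fun j => (if Nat.eqb j j0 then beta j else 1) * beta j ^ cnt (is_serv j) F))
        by (intros j; unfold cnt; destruct (Nat.eqb j j0); simpl; ring).
      rewrite prodR_map_mult, prodR_delta. destruct (Nat.ltb_spec j0 J); [unfold cnt; ring | lia].
Qed.

Lemma word_weight_interleave alpha beta p : forall ws, (length ws <= length p)%nat ->
  word_weight alpha beta (interleave p ws) =
  prodR (map beta p) * prodR (map (word_weight alpha beta) ws).
Proof.
  unfold word_weight.
  induction p as [|s p IH]; intros [|w ws] Hlen; simpl in Hlen |- *; try lia.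
  - lra.
  - rewrite IH by (simpl; lia). simpl. ring.
  - rewrite map_app, prodR_app, IH by lia. ring.
Qed.

Lemma in_interleave p : forall ws x, In x (interleave p ws) ->
  (exists s, In s p /\ x = Serv s) \/ (exists w, In w ws /\ In x w).
Proof.
  induction p as [|s p IH]; intros ws x Hx; simpl in Hx; [contradiction|].
  destruct ws as [|w ws]; simpl in Hx; destruct Hx as [<-|Hx]; try (left; exists s; simpl; auto; fail).
  - destruct (IH [] x Hx) as [[s' [Hs' ->]]|[w [[] _]]]. left. exists s'. simpl. auto.
  - apply in_app_or in Hx as [Hx|Hx]; [right; exists w; simpl; auto|].
    destruct (IH ws x Hx) as [[s' [Hs' ->]]|[w' [Hw' Hx']]].
    + left. exists s'. simpl. auto.
    + right. exists w'. simpl. auto.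
Qed.

Lemma piZ_nonneg I J alpha beta B z : 0 < B -> prob_vector I alpha -> prob_vector J beta ->
  0 <= piZ I J alpha beta B z.
Proof.
  intros HB [Ha _] [Hb _]. unfold piZ. apply Rlt_le.
  repeat apply Rmult_lt_0_compat; auto; apply prodR_map_pos; intros x Hx;
    apply in_seq in Hx; apply pow_lt; [apply Ha | apply Hb]; lia.
Qed.

Lemma piZ_eq I J alpha beta B p ws : Permutation p (seq 0 J) -> (length ws <= length p)%nat ->
  (forall w, In w ws -> Forall (letter_in_range I J) w) ->
  piZ I J alpha beta B (p, ws) = Bs J beta B * prodR (map (word_weight alpha beta) ws).
Proof.
  intros Hp Hlen Hws. unfold piZ, Bs, flatZ. simpl.
  rewrite Rmult_assoc, prodR_pow_counts.
  - rewrite word_weight_interleave, (prodR_perm _ _ (Permutation_map _ Hp)) by auto. ring.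
  - apply Forall_forall. intros x Hx. apply in_interleave in Hx as [[s [Hs ->]]|[w [Hw Hx]]].
    + simpl. now apply (In_perm_seq J p).
    + specialize (Hws w Hw). rewrite Forall_forall in Hws. auto.
Qed.

Lemma Forall2_map_seq {A C} (P : A -> C -> Prop) (f : nat -> C) d xs : forall s n,
  Forall2 P xs (map f (seq s n)) <->
  length xs = n /\ forall k, (k < n)%nat -> P (nth k xs d) (f (s + k)%nat).
Proof.
  induction xs as [|x xs IH]; intros s [|n]; simpl; split.
  - split; [auto | intros; lia].
  - constructor.
  - intros H. inversion H.
  - intros [H _]. discriminate.
  - intros H. inversion H.
  - intros [H _]. discriminate.
  - intros H. inversion H as [|? ? ? ? Hx Hxs]; subst. apply IH in Hxs as [Hlen Hnth].
    split; [now f_equal|]. intros [|k] Hk; [now rewrite Nat.add_0_r|].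
    rewrite <- Nat.add_succ_comm. apply Hnth. lia.
  - intros [Hlen Hnth]. constructor.
    + specialize (Hnth 0%nat ltac:(lia)). now rewrite Nat.add_0_r in Hnth.
    + apply IH. split; [lia|]. intros k Hk. rewrite Nat.add_succ_comm. apply (Hnth (S k)). lia.
Qed.

Lemma le_max_length {A} (ws : list (list A)) w :
  In w ws -> (length w <= fold_right Nat.max 0%nat (map (@length A) ws))%nat.
Proof.
  induction ws as [|w' ws IH]; simpl; [tauto|].
  intros [<-|Hw]; [lia | specialize (IH Hw); lia].
Qed.

Section Fiber.

Variables (I J : nat) (E : nat -> nat -> bool) (alpha beta : nat -> R) (B : R) (p : list nat).
Hypotheses (Hp : Permutation p (seq 0 J))
  (Halpha : prob_vector I alpha) (Hbeta : prob_vector J beta) (HB : 0 < B).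

Definition cust_letters (l : nat) : list letter := map Cust (filter (Ub E J (firstn l p)) (seq 0 I)).
Definition serv_letters (l : nat) : list letter := map Serv (skipn l p).
Definition level_letters (l : nat) : list letter := cust_letters l ++ serv_letters l.

Lemma letter_ok_iff l x : letter_ok I J E p l x <-> In x (level_letters l).
Proof.
  unfold level_letters, cust_letters, serv_letters. rewrite in_app_iff, !in_map_iff.
  destruct x as [i|j]; simpl; split.
  - intros [Hi HU]. left. exists i. split; auto. apply filter_In. split; auto. apply in_seq. lia.
  - intros [[i' [Hi' Hin]]|[j [Hj _]]]; [|discriminate]. injection Hi' as ->.
    apply filter_In in Hin as [Hin HU]. apply in_seq in Hin. split; [lia | auto].
  - intros Hj. right. now exists j.
  - intros [[i [Hi _]]|[j' [Hj' Hin]]]; [discriminate|]. now injection Hj' as ->.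
Qed.

Lemma NoDup_level_letters l : NoDup (level_letters l).
Proof.
  unfold level_letters, cust_letters, serv_letters. apply NoDup_app.
  - apply FinFun.Injective_map_NoDup; [intros u v H; now injection H|].
    apply NoDup_filter, seq_NoDup.
  - apply FinFun.Injective_map_NoDup; [intros u v H; now injection H|].
    apply (NoDup_app_remove_l (firstn l p)). rewrite firstn_skipn. apply (NoDup_perm_seq J p Hp).
  - intros x H1 H2. apply in_map_iff in H1 as [i [<- _]].
    apply in_map_iff in H2 as [j [Hj _]]. discriminate.
Qed.

Lemma letter_ok_in_range l x : letter_ok I J E p l x -> letter_in_range I J x.
Proof.
  destruct x as [i|j]; simpl; [tauto|].
  intros Hj. now apply (In_perm_seq J p Hp), (In_skipn_In l).
Qed.

Variable Q : nat -> list bool -> Prop.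

Definition in_fiber (z : Zstate) : Prop :=
  valid_Z I J E z /\ fst z = p /\ forall k, (k < J - 1)%nat -> Q k (map bit (nth k (snd z) [])).

Definition truncated_fiber (n : nat) : list Zstate :=
  map (pair p) (cartesian (map (fun k =>
    filter (fun w => decb (Q k (map bit w))) (words_le (level_letters (S k)) n)) (seq 0 (J - 1)))).

Lemma in_truncated_fiber n z : In z (truncated_fiber n) <->
  in_fiber z /\ forall k, (k < J - 1)%nat -> (length (nth k (snd z) []) <= n)%nat.
Proof.
  unfold truncated_fiber, in_fiber, valid_Z. rewrite in_map_iff.
  setoid_rewrite in_cartesian. setoid_rewrite (Forall2_map_seq _ _ []).
  split.
  - intros [ws [<- [Hlen Hws]]]. simpl.
    assert (Hk : forall k, (k < J - 1)%nat -> (length (nth k ws []) <= n)%nat /\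
              incl (nth k ws []) (level_letters (S k)) /\ Q k (map bit (nth k ws []))).
    { intros k Hk. specialize (Hws k Hk). simpl in Hws. apply filter_In in Hws as [Hw HQ].
      apply in_words_le in Hw. rewrite decb_spec in HQ. tauto. }
    repeat split; auto; intros k Hkl; try apply Hk; auto.
    apply Forall_forall. intros x Hx. apply letter_ok_iff. now apply (Hk k Hkl).
  - intros [[[_ [Hlen Hok]] [Hfst HQ]] Hn]. exists (snd z).
    split; [destruct z; simpl in *; now subst|]. split; auto.
    intros k Hk. simpl. apply filter_In. split; [|now apply decb_spec, HQ].
    apply in_words_le. split; auto. intros x Hx. apply letter_ok_iff.
    specialize (Hok k Hk). rewrite Forall_forall, Hfst in Hok. auto.
Qed.

(* Truncating every subword at length [n], the fiber is a product of independent levels. *)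
Lemma sumR_piZ_truncated_fiber n :
  sumR (map (piZ I J alpha beta B) (truncated_fiber n)) =
  Bs J beta B * prodR (map (fun k => bitsum (aL I J E alpha p (S k)) (bLater J beta p (S k)) n (Q k))
                         (seq 0 (J - 1))).
Proof.
  unfold truncated_fiber. rewrite map_map.
  rewrite (map_ext_in _ (fun ws => Bs J beta B * prodR (map (word_weight alpha beta) ws))).
  - rewrite sumR_map_scal_l, sumR_prodR_cartesian, map_map. f_equal. f_equal.
    apply map_ext. intros k. apply sumR_words_bitsum.
    + intros x Hx. unfold cust_letters in Hx. apply in_map_iff in Hx as [i [<- _]]. reflexivity.
    + intros x Hx. unfold serv_letters in Hx. apply in_map_iff in Hx as [j [<- _]]. reflexivity.
    + unfold cust_letters, aL. rewrite alpha_of_filter, map_map. reflexivity.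
    + unfold serv_letters. rewrite (bLater_eq J beta p Hp), map_map. reflexivity.
  - intros ws Hws. assert (Hz : In (p, ws) (truncated_fiber n)) by (apply in_map; auto).
    apply in_truncated_fiber in Hz as [[[_ [Hlen Hok]] _] _]. simpl in Hlen, Hok.
    apply piZ_eq; auto.
    + rewrite Hlen, (length_perm_seq J p Hp). lia.
    + intros w Hw. destruct (In_nth ws w [] Hw) as [k [Hk <-]]. rewrite Hlen in Hk.
      eapply Forall_impl; [apply letter_ok_in_range | apply Hok; auto].
Qed.

Lemma nn_sum_on_fiber (t : nat -> R) :
  (forall k, (k < J - 1)%nat ->
     Un_cv (fun n => bitsum (aL I J E alpha p (S k)) (bLater J beta p (S k)) n (Q k)) (t k)) ->
  nn_sum_on in_fiber (piZ I J alpha beta B) (Bs J beta B * prodR (map t (seq 0 (J - 1)))).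
Proof.
  intros Ht. apply (nn_sum_on_exhaustion _ _ _ truncated_fiber).
  - intros z _. now apply piZ_nonneg.
  - intros n. apply FinFun.Injective_map_NoDup; [intros u v H; now injection H|].
    apply NoDup_cartesian, Forall_forall. intros L HL. apply in_map_iff in HL as [k [<- _]].
    apply NoDup_filter, NoDup_words_le, NoDup_level_letters.
  - intros n z Hz. now apply in_truncated_fiber in Hz.
  - intros z Hz. exists (fold_right Nat.max 0%nat (map (@length letter) (snd z))).
    apply in_truncated_fiber. split; auto. intros k Hk. apply le_max_length, nth_In.
    destruct Hz as [[_ [Hlen _]] _]. lia.
  - intros n z Hz. apply in_truncated_fiber in Hz as [Hz Hn].
    apply in_truncated_fiber. split; auto.
  - apply (Un_cv_ext (fun n => Bs J beta B * prodR (map (fun k =>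
             bitsum (aL I J E alpha p (S k)) (bLater J beta p (S k)) n (Q k)) (seq 0 (J - 1))))).
    + intros n. symmetry. apply sumR_piZ_truncated_fiber.
    + apply CV_mult; [apply Un_cv_const|]. apply Un_cv_prodR.
      intros k Hk. apply in_seq in Hk. apply Ht. lia.
Qed.

End Fiber.

Lemma cnt_isC w : cnt isC w = n0 (map bit w).
Proof. unfold cnt, isC, n0. induction w as [|x w IH]; simpl; auto. destruct (bit x); simpl; auto. Qed.

Lemma cnt_isS w : cnt isS w = n1 (map bit w).
Proof. unfold cnt, isS, n1. induction w as [|x w IH]; simpl; auto. destruct (bit x); simpl; auto. Qed.

Lemma prod_l_shift J f : prod_l J f = prodR (map (fun k => f (S k)) (seq 0 (J - 1))).
Proof. unfold prod_l. now rewrite <- seq_shift, map_map. Qed.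

Lemma map_eq_iff_nth {A C} (f : A -> C) (xs : list A) (ys : list C) d n :
  length xs = n -> length ys = n ->
  map f xs = ys <-> forall k, (k < n)%nat -> f (nth k xs d) = nth k ys (f d).
Proof.
  intros Hxs Hys. split.
  - intros <- k _. now rewrite map_nth.
  - intros H. apply (nth_ext _ _ (f d) (f d)); [now rewrite length_map, Hxs|].
    intros k Hk. rewrite length_map in Hk. rewrite map_nth. apply H. lia.
Qed.

(* A lumped process that records a function [g] of the 0/1 pattern of each subword. *)
Lemma nn_sum_on_fiber_map {A} I J E alpha beta B p (f : list letter -> A) (g : list bool -> A)
  (ys : list A) (t : nat -> R) :
  Permutation p (seq 0 J) -> prob_vector I alpha -> prob_vector J beta -> 0 < B ->
  (forall w, f w = g (map bit w)) -> length ys = (J - 1)%nat ->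
  (forall k, (k < J - 1)%nat -> Un_cv (fun n => bitsum (aL I J E alpha p (S k)) (bLater J beta p (S k)) n
                                          (fun b => g b = nth k ys (g []))) (t k)) ->
  nn_sum_on (fun z => valid_Z I J E z /\ (fst z, map f (snd z)) = (p, ys))
    (piZ I J alpha beta B) (Bs J beta B * prodR (map t (seq 0 (J - 1)))).
Proof.
  intros Hp Halpha Hbeta HB Hfg Hys Ht.
  apply (nn_sum_on_ext (in_fiber I J E p (fun k b => g b = nth k ys (g [])))).
  2: now apply nn_sum_on_fiber.
  intros [q ws]. unfold in_fiber. simpl.
  split; intros [Hv Hz]; split; auto; pose proof (proj1 (proj2 Hv)) as Hlen; simpl in Hlen.
  - destruct Hz as [-> Hnth]. f_equal. apply (map_eq_iff_nth _ _ _ [] (J - 1)); auto.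
    intros k Hk. rewrite Hfg, Hnth by auto. now rewrite Hfg.
  - injection Hz as -> Hmap. split; auto. intros k Hk. rewrite <- Hfg.
    rewrite (map_eq_iff_nth _ _ _ [] (J - 1)) in Hmap by auto. rewrite Hmap by auto. now rewrite Hfg.
Qed.

Section Processes.

Variables (I J : nat) (E : nat -> nat -> bool) (alpha beta : nat -> R) (B : R) (p : list nat).
Hypotheses (Hp : Permutation p (seq 0 J))
  (Halpha : prob_vector I alpha) (Hbeta : prob_vector J beta) (HB : 0 < B).

Lemma piZ_sum_W_fiber ws : length ws = (J - 1)%nat ->
  nn_sum_on (fun z => valid_Z I J E z /\ Wmap z = (p, ws))
    (piZ I J alpha beta B) (piW I J E alpha beta B p ws).
Proof.
  intros Hws. unfold Wmap, piW. rewrite prod_l_shift.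
  apply (nn_sum_on_fiber_map _ _ _ _ _ _ _ (map bit) (fun b => b)); auto.
  intros k Hk. simpl. rewrite Nat.sub_0_r.
  apply (Un_cv_eventually_const _ _ (length (nth k ws []))). intros n Hn. now apply bitsum_word.
Qed.

Lemma piZ_sum_U_fiber nm : length nm = (J - 1)%nat ->
  nn_sum_on (fun z => valid_Z I J E z /\ Umap z = (p, nm))
    (piZ I J alpha beta B) (piU I J E alpha beta B p nm).
Proof.
  intros Hnm. unfold Umap, piU. rewrite prod_l_shift.
  apply (nn_sum_on_fiber_map _ _ _ _ _ _ _ _ (fun b => (n0 b, n1 b))); auto.
  { intros w. now rewrite cnt_isC, cnt_isS. }
  intros k Hk. simpl. rewrite Nat.sub_0_r, (nth_indep nm (0, 0)%nat (0, 0)%nat) by lia.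
  destruct (nth k nm (0, 0)%nat) as [n m]. simpl.
  apply (Un_cv_eventually_const _ _ (n + m)). intros N HN. now apply (bitsum_count _ _ (n + m)).
Qed.

Lemma piZ_sum_X_fiber ns : CRP I J E alpha beta -> length ns = (J - 1)%nat ->
  nn_sum_on (fun z => valid_Z I J E z /\ Xmap z = (p, ns))
    (piZ I J alpha beta B) (piX I J E alpha beta B p ns).
Proof.
  intros Hcrp Hns. unfold Xmap, piX. rewrite prod_l_shift.
  apply (nn_sum_on_fiber_map _ _ _ _ _ _ _ _ n0); auto using cnt_isC.
  intros k Hk. simpl. rewrite Nat.sub_0_r, Nat.add_1_r.
  pose proof (bFirst_add_bLater J beta p Hp (S k) Hbeta).
  pose proof (bFirst_gt_aL I J E alpha beta p Hp k Hcrp Hk).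
  pose proof (alpha_of_nonneg I alpha (Ub E J (firstn (S k) p)) Halpha).
  replace (bFirst J beta p (S k)) with (1 - bLater J beta p (S k)) by lra.
  apply bitsum_n0_cv. split; [now apply bLater_nonneg | unfold aL in *; lra].
Qed.

Lemma piZ_sum_Y_fiber ms : (0 < I)%nat -> connected_graph I J E -> length ms = (J - 1)%nat ->
  nn_sum_on (fun z => valid_Z I J E z /\ Ymap z = (p, ms))
    (piZ I J alpha beta B) (piY I J E alpha beta B p ms).
Proof.
  intros HI Hconn Hms. unfold Ymap, piY. rewrite prod_l_shift.
  apply (nn_sum_on_fiber_map _ _ _ _ _ _ _ _ n1); auto using cnt_isS.
  intros k Hk. simpl. rewrite Nat.sub_0_r, Nat.add_1_r.
  pose proof (aCLater_pos I J E alpha p Hp (S k) HI Hconn Halpha ltac:(lia)).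
  rewrite (aCLater_eq I J E alpha p Hp) in * by auto.
  apply bitsum_n1_cv. split; [now apply alpha_of_nonneg | lra].
Qed.

Lemma piZ_sum_V_fiber rs : length rs = (J - 1)%nat ->
  nn_sum_on (fun z => valid_Z I J E z /\ Vmap z = (p, rs))
    (piZ I J alpha beta B) (piV I J E alpha beta B p rs).
Proof.
  intros Hrs. unfold Vmap, piV. rewrite prod_l_shift.
  apply (nn_sum_on_fiber_map _ _ _ _ _ _ _ _ (fun b => (n0 b + n1 b)%nat)); auto.
  { intros w. now rewrite cnt_isC, cnt_isS. }
  intros k Hk. simpl. rewrite Nat.sub_0_r.
  apply (Un_cv_eventually_const _ _ (nth k rs 0%nat)). intros n Hn. now apply bitsum_length.
Qed.

Lemma piZ_sum_R_fiber : CRP I J E alpha beta ->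
  nn_sum_on (fun z => valid_Z I J E z /\ Rmap z = p)
    (piZ I J alpha beta B) (piR I J E alpha beta B p).
Proof.
  intros Hcrp. unfold piR. rewrite prod_l_shift.
  apply (nn_sum_on_ext (in_fiber I J E p (fun _ _ => True))).
  { intros z. unfold in_fiber, Rmap. tauto. }
  apply nn_sum_on_fiber; auto. intros k Hk.
  pose proof (bFirst_add_bLater J beta p Hp (S k) Hbeta).
  pose proof (bFirst_gt_aL I J E alpha beta p Hp k Hcrp Hk).
  pose proof (alpha_of_nonneg I alpha (Ub E J (firstn (S k) p)) Halpha).
  pose proof (bLater_nonneg J beta p Hp (S k) Hbeta).
  replace (bFirst J beta p (S k) - aL I J E alpha p (S k))
    with (1 - aL I J E alpha p (S k) - bLater J beta p (S k)) by lra.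
  apply bitsum_all_cv. unfold aL in *. lra.
Qed.

End Processes.

Theorem theorem5p2
  (I J : nat) (E : nat -> nat -> bool) (alpha beta : nat -> R) (B : R)
  (HI : (0 < I)%nat) (HJ : (0 < J)%nat)
  (Hconn : connected_graph I J E)
  (Halpha : prob_vector I alpha) (Hbeta : prob_vector J beta)
  (Hcrp : CRP I J E alpha beta)
  (HB : 0 < B)
  (HZ : nn_sum_on (valid_Z I J E) (piZ I J alpha beta B) 1) :
  (forall (p : list nat) (ws : list (list bool)),
     Permutation p (seq 0 J) -> length ws = (J - 1)%nat ->
     nn_sum_on (fun z => valid_Z I J E z /\ Wmap z = (p, ws))
       (piZ I J alpha beta B) (piW I J E alpha beta B p ws)) /\
  (forall (p : list nat) (nm : list (nat * nat)),
     Permutation p (seq 0 J) -> length nm = (J - 1)%nat ->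
     nn_sum_on (fun z => valid_Z I J E z /\ Umap z = (p, nm))
       (piZ I J alpha beta B) (piU I J E alpha beta B p nm)) /\
  (forall (p : list nat) (ns : list nat),
     Permutation p (seq 0 J) -> length ns = (J - 1)%nat ->
     nn_sum_on (fun z => valid_Z I J E z /\ Xmap z = (p, ns))
       (piZ I J alpha beta B) (piX I J E alpha beta B p ns)) /\
  (forall (p : list nat) (ms : list nat),
     Permutation p (seq 0 J) -> length ms = (J - 1)%nat ->
     nn_sum_on (fun z => valid_Z I J E z /\ Ymap z = (p, ms))
       (piZ I J alpha beta B) (piY I J E alpha beta B p ms)) /\
  (forall (p : list nat) (rs : list nat),
     Permutation p (seq 0 J) -> length rs = (J - 1)%nat ->
     nn_sum_on (fun z => valid_Z I J E z /\ Vmap z = (p, rs))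
       (piZ I J alpha beta B) (piV I J E alpha beta B p rs)) /\
  (forall (p : list nat),
     Permutation p (seq 0 J) ->
     nn_sum_on (fun z => valid_Z I J E z /\ Rmap z = p)
       (piZ I J alpha beta B) (piR I J E alpha beta B p)).
Proof.
  refine (conj _ (conj _ (conj _ (conj _ (conj _ _))))); intros p.
  - intros ws Hp. now apply piZ_sum_W_fiber.
  - intros nm Hp. now apply piZ_sum_U_fiber.
  - intros ns Hp. now apply piZ_sum_X_fiber.
  - intros ms Hp. now apply piZ_sum_Y_fiber.
  - intros rs Hp. now apply piZ_sum_V_fiber.
  - intros Hp. now apply piZ_sum_R_fiber.
Qed.
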